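(* Let $n \in \mathbb{Z}^+$ and consider, in the ring $\mathbb{Z}$, the Frobenius template $(\mathbb{N}, (n + \mathbb{N}) \cup \{0\}, \mathbb{N})$. If $a_1, \dots, a_k \in \mathbb{N}$ are coprime, then \[ (a_1 + \dots + a_k)n + \chi(a_1, \dots, a_k) + \mathbb{N} \subseteq \mathrm{Frob}(a_1, \dots, a_k), \] where $\mathrm{Frob}$ is taken with respect to this template.
   Context: $\mathbb{N}$ denotes the nonnegative integers and $\mathbb{Z}^+ = \mathbb{N}\setminus\{0\}$; for $S \subseteq \mathbb{Z}$ and $g \in \mathbb{Z}$, $g + S = \{g + s : s \in S\}$. Integers $a_1,\dots,a_k \in \mathbb{N}$ are coprime if $\gcd(a_1,\dots,a_k)=1$. For coprime $a_1, \dots, a_k \in \mathbb{N}$, $\chi(a_1, \dots, a_k)$ denotes the least $w \in \mathbb{N}$ such that $w + \mathbb{N} \subseteq \{\sum_{i=1}^k \lambda_i a_i : \lambda_i \in \mathbb{N}\}$ (the classical Frobenius number plus one). For the template $(\mathbb{N}, (n + \mathbb{N}) \cup \{0\}, \mathbb{N})$: $MN(a_1, \dots, a_k) = \{\sum_{i=1}^k \lambda_i a_i : \lambda_1, \dots, \lambda_k \in (n + \mathbb{N}) \cup \{0\}\}$ and $\mathrm{Frob}(a_1, \dots, a_k) = \{w \in \mathbb{Z} : w + \mathbb{N} \subseteq MN(a_1, \dots, a_k)\}$. *)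

From mathcomp Require Import all_boot all_order all_algebra.
Set Implicit Arguments. Unset Strict Implicit. Unset Printing Implicit Defensive.
Import Order.TTheory GRing.Theory Num.Theory.
Local Open Scope ring_scope.

Definition coprime_fam (k : nat) (a : 'I_k -> nat) : Prop :=
  (\big[gcdn/0%N]_(i < k) a i)%N = 1%N.

Definition semigroup_gen (k : nat) (a : 'I_k -> nat) (x : int) : Prop :=
  exists lam : 'I_k -> nat, x = \sum_(i < k) ((lam i * a i)%N)%:Z.

Definition is_chi (k : nat) (a : 'I_k -> nat) (w : nat) : Prop :=
  (forall m : nat, semigroup_gen a ((w + m)%N)%:Z) /\
  (forall w' : nat, (forall m : nat, semigroup_gen a ((w' + m)%N)%:Z) -> (w <= w')%N).

Definition MN (n k : nat) (a : 'I_k -> nat) (x : int) : Prop :=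
  exists lam : 'I_k -> nat,
    (forall i, lam i = 0%N \/ (n <= lam i)%N) /\
    x = \sum_(i < k) ((lam i * a i)%N)%:Z.

Definition Frob (n k : nat) (a : 'I_k -> nat) (w : int) : Prop :=
  forall m : nat, MN n a (w + m%:Z).

From mathcomp Require Import all_boot all_order all_algebra.
Import Order.TTheory GRing.Theory Num.Theory.
Local Open Scope ring_scope.

(* Adding n to every coefficient of a representation of x adds n (a_1 + ... + a_k)
   to x and makes every coefficient at least n; applied to the elements
   chi + N of the classical semigroup this is the whole argument. *)

Lemma Posz_sum (k : nat) (f : 'I_k -> nat) :
  \sum_(i < k) (f i)%:Z = (\sum_(i < k) f i)%N%:Z.
Proof. by rewrite (big_morph Posz PoszD (erefl (Posz 0))). Qed.

Lemma semigroup_gen_shift_MN (n k : nat) (a : 'I_k -> nat) (x : int) :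
  semigroup_gen a x -> MN n a (((\sum_(i < k) a i) * n)%N%:Z + x).
Proof.
move=> [lam ->]; exists (fun i => lam i + n)%N; split.
  by move=> i; right; rewrite leq_addl.
rewrite !Posz_sum -PoszD big_distrl -big_split /=; congr Posz.
by apply: eq_bigr => i _; rewrite mulnDl addnC [(n * _)%N]mulnC.
Qed.

Theorem proposition3p1 (n k : nat) (a : 'I_k -> nat) (chi : nat) :
  (0 < n)%N -> coprime_fam a -> is_chi a chi ->
  forall m : nat,
    Frob n a (((\sum_(i < k) a i) * n)%N%:Z + chi%:Z + m%:Z).
Proof.
move=> _ _ [chi_gen _] m m'.
rewrite -!addrA -!PoszD.
exact: semigroup_gen_shift_MN (chi_gen (m + m')%N).
Qed.
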